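(* Let $E$ be a finite graph and let $R$ be a unital commutative ring of characteristic $0$. If $\alpha_1,\dots,\alpha_n\in E^*$ satisfy $\sum_{i=1}^n\alpha_i\alpha_i^*=1$ in $L_R(E)$, then $\alpha_i^*\alpha_j=0$ for all $i\ne j$.
   Context: A graph $E=(E^0,E^1,r,s)$ has vertices $E^0$, edges $E^1$, and range and source maps $r,s$; finite means $E^0,E^1$ finite. A path is a word $e_1\cdots e_n$ with $r(e_i)=s(e_{i+1})$; vertices are paths of length $0$; $E^*$ is the set of finite paths. The Leavitt path algebra $L_R(E)$ is the universal $R$-algebra generated by pairwise orthogonal idempotents $\{v\}_{v\in E^0}$ and $\{e,e^*\}_{e\in E^1}$ with: $e^*f=0$ for $e\ne f$; $e^*e=r(e)$; $s(e)e=e=er(e)$; $e^*s(e)=e^*=r(e)e^*$; and $v=\sum_{e\in s^{-1}(v)}ee^*$ whenever $s^{-1}(v)$ is finite and nonempty. For $\alpha=e_1\cdots e_n$, $\alpha$ denotes the product $e_1\cdots e_n$ and $\alpha^*=e_n^*\cdots e_1^*$. For finite $E$, $L_R(E)$ is unital with $1=\sum_{v\in E^0}v$. *)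

From HB Require Import structures.
From mathcomp Require Import all_boot all_order all_algebra.
Set Implicit Arguments. Unset Strict Implicit. Unset Printing Implicit Defensive.
Import GRing.Theory.
Local Open Scope ring_scope.

(* Leavitt path algebra L_R(E) of a graph E = (E0, E1, r, s), constructed as
   the universal (non-unital, associative) R-algebra presented by generators
   and relations: formal terms modulo the smallest congruence containing the
   R-algebra axioms and the Leavitt path algebra relations. *)

Section LPA.
Variables (R : Type) (E0 E1 : Type).

Inductive lterm : Type :=
  | tZero : lterm
  | tV : E0 -> lterm
  | tE : E1 -> lterm
  | tG : E1 -> lterm
  | tAdd : lterm -> lterm -> lterm
  | tOpp : lterm -> lterm
  | tMul : lterm -> lterm -> lterm
  | tScale : R -> lterm -> lterm.

Definition tsum (l : seq lterm) : lterm := foldr tAdd tZero l.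

Inductive lpath : Type :=
  | PV : E0 -> lpath
  | PE : E1 -> seq E1 -> lpath.

Definition path_term (p : lpath) : lterm :=
  match p with
  | PV v => tV v
  | PE e es => foldl (fun t f => tMul t (tE f)) (tE e) es
  end.

Definition path_ghost (p : lpath) : lterm :=
  match p with
  | PV v => tV v
  | PE e es => foldl (fun t f => tMul (tG f) t) (tG e) es
  end.
End LPA.

Arguments tZero {R E0 E1}.
Arguments tV {R E0 E1}.
Arguments tE {R E0 E1}.
Arguments tG {R E0 E1}.
Arguments tAdd {R E0 E1}.
Arguments tOpp {R E0 E1}.
Arguments tMul {R E0 E1}.
Arguments tScale {R E0 E1}.
Arguments PV {E0 E1}.
Arguments PE {E0 E1}.

Section LPARel.
Variables (R : comNzRingType) (E0 E1 : finType) (r s : E1 -> E0).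

Definition is_lpath (p : lpath E0 E1) : bool :=
  match p with
  | PV _ => true
  | PE e es => path (fun a b => r a == s b) e es
  end.

Notation T := (lterm R E0 E1).

Inductive lpa_eq : T -> T -> Prop :=
  | le_refl x : lpa_eq x x
  | le_sym x y : lpa_eq x y -> lpa_eq y x
  | le_trans x y z : lpa_eq x y -> lpa_eq y z -> lpa_eq x z
  | le_add x x' y y' : lpa_eq x x' -> lpa_eq y y' -> lpa_eq (tAdd x y) (tAdd x' y')
  | le_opp x x' : lpa_eq x x' -> lpa_eq (tOpp x) (tOpp x')
  | le_mul x x' y y' : lpa_eq x x' -> lpa_eq y y' -> lpa_eq (tMul x y) (tMul x' y')
  | le_scale a x x' : lpa_eq x x' -> lpa_eq (tScale a x) (tScale a x')
  | le_addA x y z : lpa_eq (tAdd x (tAdd y z)) (tAdd (tAdd x y) z)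
  | le_addC x y : lpa_eq (tAdd x y) (tAdd y x)
  | le_add0 x : lpa_eq (tAdd tZero x) x
  | le_addN x : lpa_eq (tAdd x (tOpp x)) tZero
  | le_scaleDr a x y : lpa_eq (tScale a (tAdd x y)) (tAdd (tScale a x) (tScale a y))
  | le_scaleDl a b x : lpa_eq (tScale (a + b) x) (tAdd (tScale a x) (tScale b x))
  | le_scaleM a b x : lpa_eq (tScale (a * b) x) (tScale a (tScale b x))
  | le_scale1 x : lpa_eq (tScale 1 x) x
  | le_mulA x y z : lpa_eq (tMul x (tMul y z)) (tMul (tMul x y) z)
  | le_mulDl x y z : lpa_eq (tMul (tAdd x y) z) (tAdd (tMul x z) (tMul y z))
  | le_mulDr x y z : lpa_eq (tMul x (tAdd y z)) (tAdd (tMul x y) (tMul x z))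
  | le_scalel a x y : lpa_eq (tMul (tScale a x) y) (tScale a (tMul x y))
  | le_scaler a x y : lpa_eq (tMul x (tScale a y)) (tScale a (tMul x y))
  | le_vv v w : lpa_eq (tMul (tV v) (tV w)) (if v == w then tV v else tZero)
  | le_ghost_edge e f :
      lpa_eq (tMul (tG e) (tE f)) (if e == f then tV (r e) else tZero)
  | le_s_edge e : lpa_eq (tMul (tV (s e)) (tE e)) (tE e)
  | le_edge_r e : lpa_eq (tMul (tE e) (tV (r e))) (tE e)
  | le_ghost_s e : lpa_eq (tMul (tG e) (tV (s e))) (tG e)
  | le_r_ghost e : lpa_eq (tMul (tV (r e)) (tG e)) (tG e)
  | le_CK2 v : (0 < #|[pred e | s e == v]|)%N ->
      lpa_eq (tV v) (tsum [seq tMul (tE e) (tG e) | e <- enum [pred e | s e == v]]).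

Definition lpa_one : T := tsum [seq tV v | v <- enum E0].
End LPARel.

From mathcomp Require Import all_boot all_order all_algebra.
From mathcomp Require Import boolp.
From Stdlib Require Import Setoid.
Set Implicit Arguments. Unset Strict Implicit. Unset Printing Implicit Defensive.
Import GRing.Theory.
Local Open Scope ring_scope.

(* L_R(E) acts on R-valued functions on the boundary paths of E (infinite
   paths, and finite paths ending at a sink): vertices and edges act by
   restricting and shifting, ghost edges by prepending an edge.  Under this
   action alpha alpha^* multiplies by the indicator of the boundary paths that
   start with alpha, so applying sum_i alpha_i alpha_i^* = 1 to the constant
   function 1 shows, in characteristic 0, that every boundary path starts with
   exactly one alpha_i.  On the other hand the relations make alpha_i^* alpha_j
   vanish unless one of alpha_i, alpha_j extends the other, and then every
   boundary path through the longer one starts with both. *)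

Section BoundaryPaths.
Variables (E0 E1 : finType) (r s : E1 -> E0).

(* A boundary path is a source vertex together with its sequence of edges,
   padded with [None] after the path stops; it may only stop at a sink. *)
Definition bpath := (E0 * (nat -> option E1))%type.

Definition sink (v : E0) := forall e, s e <> v.

Definition is_bpath (x : bpath) : Prop :=
  [/\ x.2 0%N = None -> sink x.1,
      forall e, x.2 0%N = Some e -> s e = x.1,
      forall k e, x.2 k = Some e ->
        if x.2 k.+1 is Some f then s f = r e else sink (r e) &
      forall k, x.2 k = None -> x.2 k.+1 = None].

Definition bshift (e : E1) (x : bpath) : bpath := (r e, fun k => x.2 k.+1).

Definition bcons (e : E1) (x : bpath) : bpath :=
  (s e, fun k => if k is k'.+1 then x.2 k' else Some e).

Lemma bpath_src e x : is_bpath x -> x.2 0%N = Some e -> x.1 = s e.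
Proof. by case=> _ src0 _ _ /src0. Qed.

Lemma is_bpath_shift e x : is_bpath x -> x.2 0%N = Some e -> is_bpath (bshift e x).
Proof.
case=> _ _ next stop x0e; have next0 := next 0%N e x0e.
by split=> /= [x1|f x1|k f /next|k /stop] //; rewrite x1 in next0.
Qed.

Lemma is_bpath_cons e x : is_bpath x -> x.1 = r e -> is_bpath (bcons e x).
Proof.
case=> end0 src0 next stop xre.
split=> //= [f [<-] //|[|k] f /= xkf|[|k] //= /stop //].
  case: xkf => <-; case x0: (x.2 0%N) => [g|]; first by rewrite (src0 _ x0).
  by rewrite -xre; apply: end0.
exact: next xkf.
Qed.

Lemma bcons_shift e x : is_bpath x -> x.2 0%N = Some e -> bcons e (bshift e x) = x.
Proof.
move=> xP x0e; rewrite /bcons /bshift -(bpath_src xP x0e).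
by case: x x0e {xP} => v p /= x0e; congr pair; apply/funext; case.
Qed.

Lemma bshift_cons e x : x.1 = r e -> bshift e (bcons e x) = x.
Proof. by case: x => v p /= ->. Qed.

Fixpoint begins_with (L : seq E1) (x : bpath) : Prop :=
  if L is e :: L' then [/\ is_bpath x, x.2 0%N = Some e & begins_with L' (bshift e x)]
  else True.

Lemma begins_with_prefix L M x : prefix L M -> begins_with M x -> begins_with L x.
Proof.
elim: L M x => [|e L IH] [|f M] x //= /andP[/eqP <- LM] [xP x0 Mx].
by split=> //; apply: IH Mx.
Qed.

Definition out_edge (v : E0) : option E1 := [pick e | s e == v].

Lemma out_edgeP v : if out_edge v is Some e then s e = v else sink v.
Proof.
rewrite /out_edge; case: pickP => [e /eqP //|none e ev].
by move: (none e); rewrite ev eqxx.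
Qed.

Fixpoint walk_vertex (v : E0) (k : nat) : E0 :=
  if k is k'.+1 then
    if out_edge (walk_vertex v k') is Some e then r e else walk_vertex v k'
  else v.

Definition walk (v : E0) : bpath := (v, fun k => out_edge (walk_vertex v k)).

Lemma is_bpath_walk v : is_bpath (walk v).
Proof.
split=> /= [out0|e out0|k e outk|k outk]; rewrite /= ?outk //;
  [move: (out_edgeP v) | move: (out_edgeP v) | exact: out_edgeP]; by rewrite out0.
Qed.

Definition extend_path (e : E1) (es : seq E1) : bpath :=
  foldr bcons (walk (r (last e es))) (e :: es).

Lemma begins_with_extend_path e es :
  path (fun a b => r a == s b) e es -> begins_with (e :: es) (extend_path e es).
Proof.
elim: es e => [|f es IH] e /=.
  by move=> _; split=> //; apply: is_bpath_cons (is_bpath_walk _) _.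
move=> /andP[/eqP ref /IH[xP x0 esx]]; rewrite /extend_path /= in xP x0 esx *.
have src : (foldr bcons (walk (r (last f es))) (f :: es)).1 = r e by rewrite ref.
by split=> //; [apply: is_bpath_cons | rewrite bshift_cons //; split].
Qed.

End BoundaryPaths.

Section Representation.
Variables (R : comNzRingType) (E0 E1 : finType) (r s : E1 -> E0).
Local Notation bpath := (bpath E0 E1).
Local Notation is_bpath := (is_bpath r s).
Local Notation EQ := (@lpa_eq R E0 E1 r s).

Definition indic (P : Prop) (a : R) : R := if `[< P >] then a else 0.

Lemma indic1 P : indic P 1 = (`[< P >] : nat)%:R.
Proof. by rewrite /indic; case: `[< P >]. Qed.

Definition act_vertex v (F : bpath -> R) x := indic (is_bpath x /\ x.1 = v) (F x).
Definition act_edge e (F : bpath -> R) x :=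
  indic (is_bpath x /\ x.2 0%N = Some e) (F (bshift r e x)).
Definition act_ghost e (F : bpath -> R) x :=
  indic (is_bpath x /\ x.1 = r e) (F (bcons s e x)).

Fixpoint act (t : lterm R E0 E1) : (bpath -> R) -> bpath -> R :=
  match t with
  | tZero => fun _ _ => 0
  | tV v => act_vertex v
  | tE e => act_edge e
  | tG e => act_ghost e
  | tAdd a b => fun F x => act a F x + act b F x
  | tOpp a => fun F x => - act a F x
  | tMul a b => fun F => act a (act b F)
  | tScale c a => fun F x => c * act a F x
  end.

Ltac case_indic := rewrite /act_vertex /act_edge /act_ghost /indic;
  repeat match goal with |- context [`[< ?P >]] => case: (asboolP P) end.

Lemma act_add t F G x : act t (fun y => F y + G y) x = act t F x + act t G x.
Proof.
elim: t F G x => [|v|e|e|a IHa b IHb|a IHa|a IHa b IHb|c a IHa] F G x /=;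
  try by case_indic; rewrite ?addr0.
- by rewrite IHa IHb addrACA.
- by rewrite IHa opprD.
- by rewrite (_ : act b _ = fun y => act b F y + act b G y) ?IHa //; apply/funext.
- by rewrite IHa mulrDr.
Qed.

Lemma act_scale t c F x : act t (fun y => c * F y) x = c * act t F x.
Proof.
elim: t c F x => [|v|e|e|a IHa b IHb|a IHa|a IHa b IHb|d a IHa] c F x /=;
  try by case_indic; rewrite ?mulr0.
- by rewrite IHa IHb mulrDr.
- by rewrite IHa mulrN.
- by rewrite (_ : act b _ = fun y => c * act b F y) ?IHa //; apply/funext.
- by rewrite IHa mulrCA.
Qed.

Lemma act_tsum l F x : act (tsum l) F x = \sum_(t <- l) act t F x.
Proof. by elim: l => [|t l IH] /=; rewrite ?big_nil ?big_cons ?IH. Qed.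

Lemma act_vertex_mul v w F x :
  act (tMul (tV v) (tV w)) F x = act (if v == w then tV v else tZero) F x.
Proof.
case: eqVneq => [<-|vw] /=; case_indic => // -[_ xw] [_ xv].
by rewrite -xv xw eqxx in vw.
Qed.

Lemma act_ghost_edge e f F x :
  act (tMul (tG e) (tE f)) F x = act (if e == f then tV (r e) else tZero) F x.
Proof.
case: eqVneq => [<-|ef] /=; case_indic => //.
- by move=> _ [_ xr]; rewrite bshift_cons.
- by move=> + [xP xr]; case; split=> //; apply: is_bpath_cons.
- by move=> [_ /= [fe]]; rewrite fe eqxx in ef.
Qed.

Lemma act_src_edge e F x : act (tMul (tV (s e)) (tE e)) F x = act (tE e) F x.
Proof. by rewrite /=; case_indic => // -[xP x0] []; rewrite (bpath_src xP x0). Qed.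

Lemma act_edge_range e F x : act (tMul (tE e) (tV (r e))) F x = act (tE e) F x.
Proof.
by rewrite /=; case_indic => // + [xP x0]; case; split=> //; apply: is_bpath_shift.
Qed.

Lemma act_ghost_src e F x : act (tMul (tG e) (tV (s e))) F x = act (tG e) F x.
Proof.
by rewrite /=; case_indic => // + [xP xr]; case; split=> //; apply: is_bpath_cons.
Qed.

Lemma act_range_ghost e F x : act (tMul (tV (r e)) (tG e)) F x = act (tG e) F x.
Proof. by rewrite /=; case_indic. Qed.

Lemma act_edge_ghost e F x :
  act (tMul (tE e) (tG e)) F x = indic (is_bpath x /\ x.2 0%N = Some e) (F x).
Proof.
rewrite /=; case_indic => // [_ [xP x0]|+ [xP x0]]; first by rewrite bcons_shift.
by case; split=> //; apply: is_bpath_shift.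
Qed.

Lemma act_CK2 v F x : (0 < #|[pred e | s e == v]|)%N ->
  act (tV v) F x = act (tsum [seq tMul (tE e) (tG e) | e <- enum [pred e | s e == v]]) F x.
Proof.
move=> /card_gt0P[e0]; rewrite inE => /eqP e0v.
rewrite act_tsum big_map big_enum; under eq_bigr => e _ do rewrite act_edge_ghost.
rewrite /= /act_vertex {1}/indic; case: asboolP => [[xP xv]|xNv].
  case x0: (x.2 0%N) => [e|]; last by case: xP => /(_ x0) /(_ e0) []; rewrite xv.
  have ev : e \in [pred e | s e == v] by rewrite inE -xv (bpath_src xP x0).
  rewrite (bigD1 e) //= big1 => [|f /andP[_ fe]]; rewrite /indic.
    by rewrite addr0; case: asboolP => // -[].
  by case: asboolP => // -[_ [ef]]; rewrite ef eqxx in fe.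
rewrite big1 // => e; rewrite inE => /eqP ev; rewrite /indic.
by case: asboolP => // -[xP x0]; case: xNv; rewrite (bpath_src xP x0).
Qed.

Lemma act_sound a b : EQ a b -> act a = act b.
Proof.
have act_ext t u : (forall F x, act t F x = act u F x) -> act t = act u.
  by move=> tu; apply/funext => F; apply/funext => x; apply: tu.
(* [//] also closes the relations that hold definitionally in the model:
   [le_mulA], [le_mulDl] and [le_scalel]. *)
elim=> {a b} //.
- by move=> t u w _ -> _ ->.
- by move=> t t' u u' _ tt' _ uu' /=; rewrite tt' uu'.
- by move=> t t' _ tt' /=; rewrite tt'.
- by move=> t t' u u' _ tt' _ uu' /=; rewrite tt' uu'.
- by move=> c t t' _ tt' /=; rewrite tt'.
all: move=> *; apply: act_ext => F x /=.
- exact: addrA.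
- exact: addrC.
- exact: add0r.
- exact: addrN.
- exact: mulrDr.
- exact: mulrDl.
- exact/esym/mulrA.
- exact: mul1r.
- exact: act_add.
- exact: act_scale.
- exact: act_vertex_mul.
- exact: act_ghost_edge.
- exact: act_src_edge.
- exact: act_edge_range.
- exact: act_ghost_src.
- exact: act_range_ghost.
- exact: act_CK2.
Qed.

Lemma act_lpa_one F x : is_bpath x -> act (lpa_one R E0 E1) F x = F x.
Proof.
move=> xP; rewrite act_tsum big_map big_enum /= (bigD1 x.1) //= big1 => [|v xv].
  by rewrite addr0 /act_vertex /indic; case: asboolP => // -[].
by rewrite /act_vertex /indic; case: asboolP => // -[_ xv']; rewrite xv' eqxx in xv.
Qed.

End Representation.

Add Parametric Relation (R : comNzRingType) (E0 E1 : finType) (r s : E1 -> E0) :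
  (lterm R E0 E1) (lpa_eq r s)
  reflexivity proved by (@le_refl _ _ _ r s)
  symmetry proved by (@le_sym _ _ _ r s)
  transitivity proved by (@le_trans _ _ _ r s) as lpa_eq_rel.

Add Parametric Morphism (R : comNzRingType) (E0 E1 : finType) (r s : E1 -> E0) :
  (@tAdd R E0 E1) with signature lpa_eq r s ==> lpa_eq r s ==> lpa_eq r s as tAdd_morph.
Proof. by move=> *; apply: le_add. Qed.

Add Parametric Morphism (R : comNzRingType) (E0 E1 : finType) (r s : E1 -> E0) :
  (@tMul R E0 E1) with signature lpa_eq r s ==> lpa_eq r s ==> lpa_eq r s as tMul_morph.
Proof. by move=> *; apply: le_mul. Qed.

#[local] Hint Resolve le_refl : core.

Definition mul_edges (R : comNzRingType) (E0 E1 : finType)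
  (t : lterm R E0 E1) (es : seq E1) : lterm R E0 E1 :=
  foldl (fun t f => tMul t (tE f)) t es.

Definition mul_ghosts (R : comNzRingType) (E0 E1 : finType)
  (es : seq E1) (t : lterm R E0 E1) : lterm R E0 E1 :=
  foldl (fun t f => tMul (tG f) t) t es.

Add Parametric Morphism (R : comNzRingType) (E0 E1 : finType) (r s : E1 -> E0) :
  (@mul_edges R E0 E1) with signature lpa_eq r s ==> eq ==> lpa_eq r s as mul_edges_morph.
Proof. by move=> t t' tt' es; elim: es t t' tt' => //= f es IH t t' tt'; apply/IH/le_mul. Qed.

Add Parametric Morphism (R : comNzRingType) (E0 E1 : finType) (r s : E1 -> E0) :
  (@mul_ghosts R E0 E1) with signature eq ==> lpa_eq r s ==> lpa_eq r s as mul_ghosts_morph.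
Proof. by elim=> //= f es IH t t' tt'; apply/IH/le_mul. Qed.

Section Identities.
Variables (R : comNzRingType) (E0 E1 : finType) (r s : E1 -> E0).
Local Notation EQ := (@lpa_eq R E0 E1 r s).

Lemma lpa_eq0_double z : EQ z (tAdd z z) -> EQ z tZero.
Proof.
move=> zz; symmetry.
rewrite -(le_addN r s z) [X in tAdd X _]zz -le_addA le_addN.
by rewrite le_addC le_add0.
Qed.

Lemma lpa_mul0l y : EQ (tMul tZero y) tZero.
Proof. by apply: lpa_eq0_double; rewrite -le_mulDl le_add0. Qed.

Lemma lpa_mul0r y : EQ (tMul y tZero) tZero.
Proof. by apply: lpa_eq0_double; rewrite -le_mulDr le_add0. Qed.

Lemma mul_edges0 es : EQ (mul_edges tZero es) tZero.
Proof. by elim: es => //= f es IH; rewrite lpa_mul0l. Qed.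

Lemma mul_ghosts0 es : EQ (mul_ghosts es tZero) tZero.
Proof. by elim: es => //= f es IH; rewrite lpa_mul0r. Qed.

Lemma mul_mul_edges a t es : EQ (tMul a (mul_edges t es)) (mul_edges (tMul a t) es).
Proof. by elim: es t => //= f es IH t; rewrite IH le_mulA. Qed.

Lemma mul_ghosts_mul es t b : EQ (tMul (mul_ghosts es t) b) (mul_ghosts es (tMul t b)).
Proof. by elim: es t => //= e es IH t; rewrite IH le_mulA. Qed.

(* The left-hand side is (e :: es)^* (f :: fs), reassociated. *)
Lemma mul_ghosts_edges_cases es e f fs : path (fun a b => r a == s b) f fs ->
  EQ (mul_ghosts es (mul_edges (tMul (tG e) (tE f)) fs)) tZero \/
  prefix (e :: es) (f :: fs) \/ prefix (f :: fs) (e :: es).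
Proof.
elim: es e f fs => [|e2 es IH] e f fs; case: (eqVneq e f) => [<-|ef] fsP;
  try by left; rewrite le_ghost_edge (negbTE ef) mul_edges0 mul_ghosts0.
  by right; left; rewrite /= eqxx prefix0s.
case: fs fsP => [|f2 fs] /=; first by right; right; rewrite eqxx.
move=> /andP[/eqP ref2 fsP]; rewrite !eqxx /=.
have -> : EQ (mul_ghosts es (tMul (tG e2)
            (mul_edges (tMul (tMul (tG e) (tE e)) (tE f2)) fs)))
          (mul_ghosts es (mul_edges (tMul (tG e2) (tE f2)) fs)).
  by rewrite le_ghost_edge eqxx ref2 le_s_edge mul_mul_edges.
exact: IH.
Qed.

End Identities.

Section PathProjections.
Variables (R : comNzRingType) (E0 E1 : finType) (r s : E1 -> E0).
Local Notation bpath := (bpath E0 E1).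
Local Notation is_bpath := (is_bpath r s).
Local Notation act := (@act R E0 E1 r s).
Local Notation EQ := (@lpa_eq R E0 E1 r s).

Definition starts_with (a : lpath E0 E1) (x : bpath) : Prop :=
  match a with
  | PV v => is_bpath x /\ x.1 = v
  | PE e es => begins_with r s (e :: es) x
  end.

Lemma starts_with_bpath a x : starts_with a x -> is_bpath x.
Proof. by case: a => [v [] | e es []]. Qed.

Lemma act_mul_edges t es H :
  act (mul_edges t es) H = act t (foldr (act_edge r s) H es).
Proof. by elim: es t => //= f es IH t; rewrite IH. Qed.

Lemma act_mul_ghosts es t G :
  act (mul_ghosts es t) G = foldl (fun K f => act_ghost r s f K) (act t G) es.
Proof. by elim: es t => //= f es IH t; rewrite IH. Qed.

Lemma act_edges_ghosts L (K : bpath -> R) :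
  foldr (act_edge r s) (foldl (fun K f => act_ghost r s f K) K L) L =
  fun x => indic (begins_with r s L x) (K x).
Proof.
elim: L K => [|e L IH] K /=; apply/funext => x; first by rewrite /indic asboolT.
rewrite IH /act_edge /act_ghost /indic.
case: (asboolP (is_bpath x /\ _)) => [[xP x0]|xN]; last first.
  by case: asboolP => // -[xP x0 _]; case: xN.
rewrite bcons_shift // (asboolT (conj (is_bpath_shift xP x0) erefl)).
by case: asboolP => [esx|esxN]; case: asboolP => // -[].
Qed.

Lemma act_path_mul_ghost a G x :
  act (tMul (path_term R a) (path_ghost R a)) G x = indic (starts_with a x) (G x).
Proof.
case: a => [v|e es] /=.
  by rewrite /act_vertex /indic; case: asboolP.
rewrite (act_mul_edges (tE e)) (act_mul_ghosts es (tG e)).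
exact: (congr1 (fun F => F x) (act_edges_ghosts (e :: es) G)).
Qed.

Lemma starts_with_common_extension a b :
  is_lpath r s a -> is_lpath r s b ->
  EQ (tMul (path_ghost R a) (path_term R b)) tZero \/
  exists x, starts_with a x /\ starts_with b x.
Proof.
have extend_src f fs : path (fun a b => r a == s b) f fs ->
    starts_with (PV (s f)) (extend_path r s f fs) /\
    starts_with (PE f fs) (extend_path r s f fs).
  move=> /begins_with_extend_path fsx; have [xP x0 _] := fsx.
  by split=> //; split.
case: a b => [v|e es] [w|f fs] aP bP.
- case: (eqVneq v w) => [<-|vw]; last by left; rewrite le_vv (negbTE vw).
  by right; exists (walk r s v); split; split=> //; apply: is_bpath_walk.
- case: (eqVneq v (s f)) => [->|vf].
    by right; exists (extend_path r s f fs); apply: extend_src.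
  left; change (EQ (tMul (tV v) (mul_edges (tE f) fs)) tZero).
  rewrite mul_mul_edges -(le_s_edge R r s f) le_mulA le_vv (negbTE vf).
  by rewrite lpa_mul0l mul_edges0.
- case: (eqVneq w (s e)) => [->|we].
    by right; exists (extend_path r s e es); case: (extend_src _ _ aP).
  left; change (EQ (tMul (mul_ghosts es (tG e)) (tV w)) tZero).
  rewrite mul_ghosts_mul -(le_ghost_s R r s e) -le_mulA le_vv eq_sym (negbTE we).
  by rewrite lpa_mul0r mul_ghosts0.
- change (EQ (tMul (mul_ghosts es (tG e)) (mul_edges (tE f) fs)) tZero \/
          exists x, starts_with (PE e es) x /\ starts_with (PE f fs) x).
  rewrite mul_ghosts_mul mul_mul_edges.
  case: (mul_ghosts_edges_cases R es e bP) => [|[esfs|fses]]; [by left | right ..].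
    exists (extend_path r s f fs); have [_ x_fs] := extend_src _ _ bP.
    by split=> //; apply: begins_with_prefix esfs x_fs.
  exists (extend_path r s e es); have [_ x_es] := extend_src _ _ aP.
  by split=> //; apply: begins_with_prefix fses x_es.
Qed.

End PathProjections.

Lemma natr_eq1 (R : nzRingType) (k : nat) :
  (forall m : nat, (0 < m)%N -> m%:R != 0 :> R) -> k%:R = 1 :> R -> k = 1%N.
Proof.
move=> charR0; case: k => [|[|k]] // kR.
  by move: kR => /esym/eqP; rewrite oner_eq0.
have : k.+1%:R = 0 :> R by apply: (addIr 1); rewrite add0r -mulrSr.
by move/eqP; rewrite (negbTE (charR0 k.+1 isT)).
Qed.

Section UnitDecomposition.
Variables (R : comNzRingType) (E0 E1 : finType) (r s : E1 -> E0).
Hypothesis charR0 : forall m : nat, (0 < m)%N -> m%:R != 0 :> R.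
Variables (n : nat) (alpha : 'I_n -> lpath E0 E1).
Hypothesis alpha_unit : lpa_eq r s
  (tsum [seq tMul (path_term R (alpha i)) (path_ghost R (alpha i)) | i <- enum 'I_n])
  (lpa_one R E0 E1).

Lemma count_starts_with x :
  is_bpath r s x -> (\sum_(i < n) `[< starts_with r s (alpha i) x >])%N = 1%N.
Proof.
move=> xP; apply: (natr_eq1 charR0); rewrite natr_sum.
rewrite -[RHS](act_lpa_one (fun _ => 1 : R) xP) -(act_sound alpha_unit).
rewrite act_tsum big_map big_enum.
by apply: eq_bigr => i _; rewrite act_path_mul_ghost indic1.
Qed.

End UnitDecomposition.

Theorem lemma4p1 (R : comNzRingType)
    (charR0 : forall m : nat, (0 < m)%N -> m%:R != 0 :> R)
    (E0 E1 : finType) (r s : E1 -> E0)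
    (n : nat) (alpha : 'I_n -> lpath E0 E1)
    (Halpha : forall i, is_lpath r s (alpha i))
    (Hsum : lpa_eq r s
              (tsum [seq tMul (path_term R (alpha i)) (path_ghost R (alpha i))
                    | i <- enum 'I_n])
              (lpa_one R E0 E1)) :
  forall i j : 'I_n, i != j ->
    lpa_eq r s (tMul (path_ghost R (alpha i)) (path_term R (alpha j))) tZero.
Proof.
move=> i j ij.
case: (starts_with_common_extension R (Halpha i) (Halpha j)) => // -[x [xi xj]].
have := count_starts_with charR0 Hsum (starts_with_bpath xi).
rewrite (bigD1 i) // (bigD1 j) 1?eq_sym //= !asboolT //.
Qed.
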